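(* Fix $n$ and $l\ge1$, let $q=p_{l+1}$, and let $T^*\subseteq T$. Suppose $A^*\subseteq(2n/q,2n]$ is of the form $A^*=\bigcup_{t\in T^*}A_t$, where each $A_t$ is a maximum-size antichain of the poset $L(t)$ (under divisibility). Then $A^*$ can be extended to a primitive set $A$ with $|A|=n$ and $A^*\subseteq A\subseteq (2n/q,2n]\cap\mathbb Z$. Furthermore, the extension can be chosen so that distinct such $A^*$ give distinct $A$ (namely $A\cap\bigcup_{t\in T^*}L(t)=A^*$).
   Context: A set of positive integers is primitive if no element divides another. Let $p_1<p_2<\dots$ be the primes. $M_l$ is the set of positive integers all of whose prime factors lie in $\{p_1,\dots,p_l\}$, and $M_l(x)=\{m\in M_l:m\le x\}$. Let $T=\{t\in\{1,\dots,2n\}:\gcd(t,p_1p_2\cdots p_l)=1\}$, and for $t\in T$ let $L(t)=t\cdot M_l(2n/t)=\{tm: m\in M_l,\ tm\le 2n\}$, ordered by divisibility. *)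

From mathcomp Require Import all_boot.
Set Implicit Arguments. Unset Strict Implicit. Unset Printing Implicit Defensive.

Definition primepi (x : nat) : nat := count prime (iota 0 x.+1).

(* p is the k-th prime p_k (1-indexed) *)
Definition is_kth_prime (k p : nat) : bool := prime p && (primepi p == k).

(* With q = p_(l+1), the primes p_1,...,p_l are exactly the primes < q. *)
(* m \in M_l : positive integer all of whose prime factors are < q *)
Definition inM (q m : nat) : bool := (0 < m) && all (fun p => p < q) (primes m).

Definition primorial (q : nat) : nat := \prod_(p < q | prime p) p.

Definition Tset (n q : nat) : {set 'I_(2 * n).+1} :=
  [set t : 'I_(2 * n).+1 | (0 < val t) && (gcdn (val t) (primorial q) == 1)].

Definition Lset (n q t : nat) : {set 'I_(2 * n).+1} :=
  [set x : 'I_(2 * n).+1 | [exists m : 'I_(2 * n).+1, inM q m && (val x == t * m)]].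

Definition antichain (N : nat) (A : {set 'I_N}) : Prop :=
  forall x y : 'I_N, x \in A -> y \in A -> val x %| val y -> x = y.

Definition primitive (N : nat) (A : {set 'I_N}) : Prop :=
  (forall x : 'I_N, x \in A -> 0 < val x) /\ antichain A.

Definition max_antichain (N : nat) (P A : {set 'I_N}) : Prop :=
  A \subset P /\ antichain A /\
  (forall B : {set 'I_N}, B \subset P -> antichain B -> #|B| <= #|A|).

From mathcomp Require Import all_boot zify.
Set Implicit Arguments. Unset Strict Implicit. Unset Printing Implicit Defensive.

(* Take A = A* together with every x in (n, 2n] lying in no L(t), t in T*.
   Multiplying x by the largest power 2^j with 2^j x <= 2n maps any
   antichain injectively into (n, 2n], and it maps each L(t) into itself
   since 2 < q.  For t in T*, the set (n, 2n] ∩ L(t) is an antichain, so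
   maximality of A_t forces the image of A_t to be all of it; hence the
   image of A is (n, 2n] and |A| = n.  A is primitive because L(t) is
   closed under multiplication by elements of M_l and, t being coprime
   to p_1...p_l, under division by them; a quotient y/x of elements of A
   lies in M_l because x > 2n/q. *)

Lemma inMP q m :
  reflect (0 < m /\ forall p, prime p -> p %| m -> p < q) (inM q m).
Proof.
apply: (iffP andP) => [[m_gt0 /allP small]|[m_gt0 small]]; split => //.
- by move=> p p_pr p_m; apply: small; rewrite mem_primes p_pr m_gt0.
- by apply/allP => p; rewrite mem_primes => /and3P[p_pr _ p_m]; apply: small.
Qed.

Lemma inM_mul q a b : inM q a -> inM q b -> inM q (a * b).
Proof.
move=> /inMP[a_gt0 sa] /inMP[b_gt0 sb]; apply/inMP.
split=> [|p p_pr]; first by rewrite muln_gt0 a_gt0.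
by rewrite Euclid_dvdM // => /orP[]; [apply: sa | apply: sb].
Qed.

Lemma inM_dvd q d m : d %| m -> inM q m -> inM q d.
Proof.
move=> d_m /inMP[m_gt0 sm]; apply/inMP; split; first exact: dvdn_gt0 d_m.
by move=> p p_pr p_d; apply: sm (dvdn_trans p_d d_m).
Qed.

Lemma inM_exp2 q e : 2 < q -> inM q (2 ^ e).
Proof.
move=> q_gt2; apply/inMP; split=> [|p p_pr]; first by rewrite expn_gt0.
by rewrite Euclid_dvdX // => /andP[/(dvdn_leq (isT : 0 < 2)) p_le2 _]; lia.
Qed.

Lemma inM_small_factor q N k x : N < q * x -> 0 < k -> k * x <= N -> inM q k.
Proof.
move=> Nqx k_gt0 kxN; apply/inMP; split=> // p _ p_k.
have := dvdn_leq k_gt0 p_k; rewrite ltnNge; apply: contraTN => q_p; nia.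
Qed.

Lemma primorial_dvd q p : prime p -> p < q -> p %| primorial q.
Proof.
move=> p_pr p_q; rewrite /primorial (bigD1 (Ordinal p_q)) //=.
exact: dvdn_mulr.
Qed.

Lemma coprime_primorial_inM q t k :
  coprime t (primorial q) -> inM q k -> coprime t k.
Proof.
move=> cop k_M; apply: contraT => not_cop.
have gcd_gt1 : 1 < gcdn t k.
  by have := gcdn_gt0 t k; case/inMP: k_M => -> _; rewrite orbT; move: not_cop; lia.
have p_pr := pdiv_prime gcd_gt1.
have p_gcd := pdiv_dvd (gcdn t k).
have p_k : pdiv (gcdn t k) %| k := dvdn_trans p_gcd (dvdn_gcdr _ _).
have : pdiv (gcdn t k) %| gcdn t (primorial q).
  rewrite dvdn_gcd (dvdn_trans p_gcd (dvdn_gcdl _ _)) primorial_dvd //.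
  by case/inMP: k_M => _; apply.
by rewrite (eqP cop) dvdn1 => /eqP p1; rewrite p1 in p_pr.
Qed.

Lemma kth_prime_gt2 l q : 1 <= l -> is_kth_prime l.+1 q -> 2 < q.
Proof.
move=> l_ge1 /andP[q_pr /eqP pi_q]; have := prime_gt1 q_pr.
case: (ltngtP q 2) => // q_eq2 _.
by move: pi_q; rewrite q_eq2 (_ : primepi 2 = 1) //; lia.
Qed.

Lemma card_upper_half n : #|[set x : 'I_(2 * n).+1 | n < x]| = n.
Proof.
rewrite cardsE -sum1_card.
rewrite -(big_mkord (fun x => n < x) (fun _ => 1)) sum1_count /index_iota subn0.
have -> : (2 * n).+1 = n.+1 + n by lia.
rewrite iotaD count_cat (eq_in_count (a2 := pred0)) ?count_pred0; last first.
  by move=> x; rewrite mem_iota /=; lia.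
rewrite (eq_in_count (a2 := predT)) ?count_predT ?size_iota //.
by move=> x; rewrite mem_iota /=; lia.
Qed.

Lemma dvdn_upper_half N x y : N < 2 * x -> 0 < y <= N -> x %| y -> x = y.
Proof. by move=> Nx y_bds /dvdnP[[|[|k]] y_kx]; nia. Qed.

Lemma upper_half_antichain n : antichain [set x : 'I_(2 * n).+1 | n < x].
Proof.
move=> x y; rewrite !inE => x_up y_up x_y; apply: val_inj.
by apply: (dvdn_upper_half (N := 2 * n)) x_y => /=; have := ltn_ord y; lia.
Qed.

Section LsetTheory.

Variables (n q t : nat).
Hypothesis t_gt0 : 0 < t.

Lemma LsetP (x : 'I_(2 * n).+1) :
  reflect (exists2 m, inM q m & val x = t * m) (x \in Lset n q t).
Proof.
rewrite inE; apply: (iffP existsP) => [[m /andP[m_M /eqP ->]]|[m m_M x_tm]].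
  by exists m.
have m_lt : m < (2 * n).+1 by have := ltn_ord x; rewrite x_tm; nia.
by exists (Ordinal m_lt); rewrite /= m_M x_tm eqxx.
Qed.

Lemma Lset_mul (x y : 'I_(2 * n).+1) k :
  x \in Lset n q t -> inM q k -> val y = k * val x -> y \in Lset n q t.
Proof.
move=> /LsetP[m m_M ->] k_M y_kx; apply/LsetP.
by exists (m * k); [apply: inM_mul | rewrite y_kx; nia].
Qed.

Hypothesis t_cop : coprime t (primorial q).

Lemma Lset_div (x y : 'I_(2 * n).+1) k :
  y \in Lset n q t -> inM q k -> val y = k * val x -> x \in Lset n q t.
Proof.
move=> /LsetP[m m_M y_tm] k_M y_kx.
have cop_kt : coprime k t by rewrite coprime_sym (coprime_primorial_inM t_cop).
have k_m : k %| m by rewrite -(Gauss_dvdr _ cop_kt) -y_tm y_kx dvdn_mulr.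
case/dvdnP: (k_m) => j m_jk; apply/LsetP; exists j.
  by apply: (inM_dvd _ m_M); rewrite m_jk dvdn_mulr.
have k_gt0 : 0 < k by case/inMP: k_M.
by apply/eqP; rewrite -(eqn_pmul2l k_gt0) -y_kx y_tm m_jk; apply/eqP; nia.
Qed.

End LsetTheory.

Lemma Lset_inj n q t t' (y : 'I_(2 * n).+1) :
  0 < t -> coprime t (primorial q) -> 0 < t' -> coprime t' (primorial q) ->
  y \in Lset n q t -> y \in Lset n q t' -> t = t'.
Proof.
move=> t_gt0 t_cop t'_gt0 t'_cop.
move=> /(LsetP _ t_gt0)[m m_M y_tm] /(LsetP _ t'_gt0)[m' m'_M y_tm'].
apply/eqP; rewrite eqn_dvd.
rewrite -(Gauss_dvdl _ (coprime_primorial_inM t_cop m'_M)).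
rewrite -(Gauss_dvdl _ (coprime_primorial_inM t'_cop m_M)).
by rewrite -y_tm -y_tm' {1}y_tm y_tm' !dvdn_mulr.
Qed.

Definition dyadic_lift N x := 2 ^ trunc_log 2 (N %/ x) * x.

Lemma dyadic_lift_le N x : x <= N -> dyadic_lift N x <= N.
Proof.
rewrite /dyadic_lift; case: (posnP x) => [->|x_gt0 xN]; first by rewrite muln0.
have Nx_gt0 : 0 < N %/ x by rewrite divn_gt0.
by have := trunc_logP (isT : 1 < 2) Nx_gt0; have := leq_divM N x; nia.
Qed.

Lemma dyadic_lift_gt N x : 0 < x -> N < 2 * dyadic_lift N x.
Proof.
move=> x_gt0; rewrite /dyadic_lift.
have := trunc_log_ltn (N %/ x) (isT : 1 < 2); rewrite expnS.
by have := ltn_ceil N x_gt0; nia.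
Qed.

Lemma dyadic_lift_id N x : x <= N < 2 * x -> dyadic_lift N x = x.
Proof.
move=> /andP[xN Nx]; have x_gt0 : 0 < x by lia.
have Nx_le1 : N %/ x <= 1 by rewrite -ltnS ltn_divLR //; lia.
rewrite /dyadic_lift.
have /eqP -> : trunc_log 2 (N %/ x) == 0 by rewrite trunc_log_eq0 Nx_le1 orbT.
by rewrite mul1n.
Qed.

Lemma dyadic_lift_eq_dvd N x y :
  dyadic_lift N x = dyadic_lift N y -> (x %| y) || (y %| x).
Proof.
rewrite /dyadic_lift.
wlog ab : x y / trunc_log 2 (N %/ x) <= trunc_log 2 (N %/ y).
  move=> wlog_ab; case: (leqP (trunc_log 2 (N %/ x)) (trunc_log 2 (N %/ y))).
    exact: wlog_ab.
  by move=> /ltnW /wlog_ab le_yx /esym /le_yx; rewrite orbC.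
rewrite -(subnKC ab) expnD -mulnA => /eqP; rewrite eqn_pmul2l ?expn_gt0 // => /eqP ->.
by rewrite dvdn_mull ?orbT.
Qed.

Definition ord_dyadic_lift N (x : 'I_N.+1) : 'I_N.+1 :=
  @Ordinal N.+1 (dyadic_lift N x) (@dyadic_lift_le N x (ltn_ord x)).

Lemma ord_dyadic_lift_antichain_inj N (B : {set 'I_N.+1}) :
  antichain B -> {in B &, injective (@ord_dyadic_lift N)}.
Proof.
move=> anti_B x y xB yB /(congr1 val) /dyadic_lift_eq_dvd /orP[x_y|y_x].
  exact: anti_B.
by apply/esym/anti_B.
Qed.

Lemma Lset_dyadic_lift n q t (x : 'I_(2 * n).+1) :
  0 < t -> 2 < q -> x \in Lset n q t -> ord_dyadic_lift x \in Lset n q t.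
Proof. by move=> t_gt0 q_gt2 x_L; apply: (Lset_mul t_gt0 x_L (inM_exp2 _ q_gt2)). Qed.

Section Extension.

Variables (n q : nat) (Tstar : {set 'I_(2 * n).+1}).
Variable At : 'I_(2 * n).+1 -> {set 'I_(2 * n).+1}.
Hypothesis q_gt2 : 2 < q.
Hypothesis Tstar_sub : Tstar \subset Tset n q.
Hypothesis At_max : forall t, t \in Tstar -> max_antichain (Lset n q (val t)) (At t).
Hypothesis Astar_range :
  forall x, x \in \bigcup_(t in Tstar) At t -> 2 * n < q * val x.

Local Notation upper := [set x : 'I_(2 * n).+1 | n < x].
Local Notation Astar := (\bigcup_(t in Tstar) At t).
Local Notation Lstar := (\bigcup_(t in Tstar) Lset n q (val t)).
Local Notation A := (Astar :|: (upper :\: Lstar)).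

Lemma Tstar_gt0_coprime t :
  t \in Tstar -> 0 < val t /\ coprime (val t) (primorial q).
Proof. by move/(subsetP Tstar_sub); rewrite inE => /andP[]. Qed.

Lemma At_sub t : t \in Tstar -> At t \subset Lset n q (val t).
Proof. by case/At_max. Qed.

Lemma At_antichain t : t \in Tstar -> antichain (At t).
Proof. by case/At_max => _ []. Qed.

Lemma Astar_sub_Lstar : Astar \subset Lstar.
Proof.
apply/subsetP => x /bigcupP[t tT x_At].
by apply/bigcupP; exists t => //; apply: subsetP (At_sub tT) x x_At.
Qed.

Lemma extension_range x : x \in A -> 2 * n < q * val x.
Proof.
rewrite !inE => /orP[/Astar_range //|/andP[_ x_gt_n]] /=.
by have := leq_mul (ltnW q_gt2) (leqnn x); lia.
Qed.

Lemma extension_gt0 x : x \in A -> 0 < val x.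
Proof. by move/extension_range; case: (val x) => //; rewrite muln0. Qed.

Lemma extension_quotient_inM (x y : 'I_(2 * n).+1) k :
  x \in A -> y \in A -> val y = k * val x -> inM q k.
Proof.
move=> xA yA y_kx; apply: (inM_small_factor (extension_range xA)).
- by have := extension_gt0 yA; rewrite y_kx muln_gt0 => /andP[].
- by rewrite -y_kx -ltnS ltn_ord.
Qed.

Lemma extension_antichain : antichain A.
Proof.
move=> x y xA yA x_y; case/dvdnP: (x_y) => k y_kx.
have k_M := extension_quotient_inM xA yA y_kx.
move: (xA) (yA); rewrite !inE.
move=> /orP[x_st|/andP[x_nL x_up]] /orP[y_st|/andP[y_nL y_up]].
- case/bigcupP: x_st => t tT x_At; case/bigcupP: y_st => t' t'T y_At'.
  have [t_gt0 t_cop] := Tstar_gt0_coprime tT.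
  have [t'_gt0 t'_cop] := Tstar_gt0_coprime t'T.
  have y_L := Lset_mul t_gt0 (subsetP (At_sub tT) x x_At) k_M y_kx.
  have y_L' := subsetP (At_sub t'T) y y_At'.
  have /val_inj tt' := Lset_inj t_gt0 t_cop t'_gt0 t'_cop y_L y_L'.
  by move: y_At'; rewrite -tt' => y_At; apply: (At_antichain tT).
- case/bigcupP: x_st => t tT x_At; have [t_gt0 _] := Tstar_gt0_coprime tT.
  case/negP: y_nL; apply/bigcupP; exists t => //.
  exact: (Lset_mul t_gt0 (subsetP (At_sub tT) x x_At) k_M y_kx).
- case/bigcupP: y_st => t tT y_At; have [t_gt0 t_cop] := Tstar_gt0_coprime tT.
  case/negP: x_nL; apply/bigcupP; exists t => //.
  exact: (Lset_div t_gt0 t_cop (subsetP (At_sub tT) y y_At) k_M y_kx).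
- by apply: (upper_half_antichain (n := n)); rewrite ?inE.
Qed.

Local Notation lift := (@ord_dyadic_lift (2 * n)).

Lemma lift_upper (x : 'I_(2 * n).+1) : 0 < x -> lift x \in upper.
Proof. by move=> x_gt0; rewrite inE /=; have := dyadic_lift_gt (2 * n) x_gt0; lia. Qed.

Lemma lift_At t : t \in Tstar -> lift @: At t = upper :&: Lset n q (val t).
Proof.
move=> tT; have [t_gt0 _] := Tstar_gt0_coprime tT.
apply/eqP; rewrite eqEcard; apply/andP; split.
  apply/subsetP => _ /imsetP[x x_At ->]; rewrite inE; apply/andP; split.
    apply/lift_upper/extension_gt0.
    by apply/setUP; left; apply/bigcupP; exists t.
  exact: Lset_dyadic_lift t_gt0 q_gt2 (subsetP (At_sub tT) x x_At).
rewrite card_in_imset; last exact: ord_dyadic_lift_antichain_inj (At_antichain tT).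
case: (At_max tT) => _ [_ At_largest]; apply: At_largest; first exact: subsetIr.
move=> x y; rewrite !inE => /andP[x_up _] /andP[y_up _].
by apply: upper_half_antichain; rewrite inE.
Qed.

Lemma lift_extension : lift @: A = upper.
Proof.
apply/setP => u; apply/imsetP/idP => [[x xA ->]|u_up].
  exact/lift_upper/extension_gt0.
case: (boolP (u \in Lstar)) => [/bigcupP[t tT u_L]|u_nL].
  have /imsetP[x x_At ->] : u \in lift @: At t by rewrite lift_At // inE u_up.
  by exists x => //; apply/setUP; left; apply/bigcupP; exists t.
exists u; first by apply/setUP; right; apply/setDP.
apply: val_inj; rewrite /= dyadic_lift_id //; move: u_up; rewrite inE.
by have := ltn_ord u; lia.
Qed.

Lemma card_extension : #|A| = n.
Proof.
rewrite -(card_in_imset (ord_dyadic_lift_antichain_inj extension_antichain)).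
by rewrite lift_extension card_upper_half.
Qed.

Lemma extension_trace : A :&: Lstar = Astar.
Proof.
rewrite setIUl (setIidPl Astar_sub_Lstar).
by rewrite setDE -setIA (setIC (~: _)) setICr setI0 setU0.
Qed.

Lemma extension_spec :
  exists B : {set 'I_(2 * n).+1},
    [/\ primitive B, #|B| = n, Astar \subset B,
        (forall x : 'I_(2 * n).+1, x \in B -> 2 * n < q * val x) &
        B :&: Lstar = Astar].
Proof.
exists A; split.
- by split; [exact: extension_gt0 | exact: extension_antichain].
- exact: card_extension.
- exact: subsetUl.
- exact: extension_range.
- exact: extension_trace.
Qed.

End Extension.

Theorem claim1 (n l q : nat) (hl : 1 <= l) (hq : is_kth_prime l.+1 q)
  (Tstar : {set 'I_(2 * n).+1}) (hT : Tstar \subset Tset n q)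
  (At : 'I_(2 * n).+1 -> {set 'I_(2 * n).+1})
  (hAt : forall t, t \in Tstar -> max_antichain (Lset n q (val t)) (At t))
  (hrange : forall x : 'I_(2 * n).+1,
      x \in \bigcup_(t in Tstar) At t -> 2 * n < q * val x) :
  exists A : {set 'I_(2 * n).+1},
    [/\ primitive A, #|A| = n,
        \bigcup_(t in Tstar) At t \subset A,
        (forall x : 'I_(2 * n).+1, x \in A -> 2 * n < q * val x) &
        A :&: \bigcup_(t in Tstar) Lset n q (val t) = \bigcup_(t in Tstar) At t].
Proof. exact: extension_spec (kth_prime_gt2 hl hq) hT hAt hrange. Qed.
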